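(* Let $M=M(\mathbb{1},\lambda,e,V)$ be the generic characteristic matrix of a $\mathbb{Z}^d$-periodic graph specialized at $z=\mathbb{1}=(1,\dots,1)$ (a symmetric $n\times n$ matrix). For any cycle cover $c$ of $[n]$ with $M_c\neq 0$, any monomial occurring in $M_c$ determines $c$: if a monomial (in $\lambda,e,V$) occurs in both $M_c$ and $M_{c'}$ for cycle covers $c,c'$ with $M_c,M_{c'}\neq 0$, then $c=c'$.
   Context: A $\mathbb{Z}^d$-periodic graph $\Gamma$ is a simple undirected graph of bounded degree with a free $\mathbb{Z}^d$-action by automorphisms, $(\alpha,v)\mapsto\alpha+v$, with finitely many vertex and edge orbits; $W$ is a set of orbit representatives of vertices, identified with $[n]=\{1,\dots,n\}$. The generic characteristic matrix is $M(z,\lambda,e,V)=\lambda I_n-H(z,e,V)$, where $H(z,e,V)$ has $(v,u)$ entry $\delta_{v,u}V(v)-\sum_{\alpha\in\mathbb{Z}^d: v\sim\alpha+u}e_{(v,\alpha+u)}z^\alpha$ with independent indeterminates $e$ (one per edge orbit, $e_{(u,v)}=e_{(v,u)}$) and $V(v)$ (one per $v\in W$). For $w\in S_n$, $|w|$ is the multigraph on $[n]$ with one edge $\{i,w(i)\}$ for each $i$ (fixed points give loops, 2-cycles give double edges); such a graph is a cycle cover of $[n]$. For a symmetric matrix $M=(f_{i,j})$ and a cycle cover $c$, $M_c$ denotes $M_w=f_{1,w(1)}\cdots f_{n,w(n)}$ for any $w$ with $|w|=c$ (this depends only on $c$). *)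

From HB Require Import structures.
From mathcomp Require Import all_boot all_order all_algebra all_fingroup.
From mathcomp Require Import mpoly.
Set Implicit Arguments. Unset Strict Implicit. Unset Printing Implicit Defensive.
Import GRing.Theory.
Local Open Scope ring_scope.

(* A Z^d-periodic graph with n vertex orbits W = 'I_n.  Vertices are
   identified with W x Z^d (the action being free with finitely many orbits),
   the vertex (u, beta) standing for beta + u.  The graph is given by a list
   of representatives of its (finitely many) edge orbits: representative k is
   (a, b, alpha), i.e. the edge {a, alpha + b}; its orbit is
   { {beta + a, beta + alpha + b} | beta in Z^d }.                         *)
Record PGraph (n d : nat) := {
  pg_m : nat;
  pg_rep : 'I_pg_m -> 'I_n * 'I_n * 'rV[int]_d;
  pg_noloop : forall k, ~ ((pg_rep k).1.1 = (pg_rep k).1.2 /\ (pg_rep k).2 = 0);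
  (* distinct representatives lie in distinct edge orbits (the orbit of
     (a,b,alpha) is also represented by (b,a,-alpha)) *)
  pg_distinct : forall k k', k <> k' ->
     pg_rep k' <> pg_rep k /\
     pg_rep k' <> ((pg_rep k).1.2, (pg_rep k).1.1, - (pg_rep k).2)
}.

Arguments pg_m {n d} p : rename.
Arguments pg_rep {n d} p _ : rename.

Definition pg_adj n d (G : PGraph n d) (x y : 'I_n * 'rV[int]_d) : Prop :=
  exists k, let: (a, b, al) := pg_rep G k in
    (x.1 = a /\ y.1 = b /\ y.2 - x.2 = al) \/
    (x.1 = b /\ y.1 = a /\ x.2 - y.2 = al).

(* Polynomial ring Z[lambda, e_1..e_m, V_1..V_n]. *)
Definition nvar n d (G : PGraph n d) : nat := (1 + pg_m G + n)%N.

Definition lamv n d (G : PGraph n d) : {mpoly int[nvar G]} :=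
  'X_(lshift n (@ord0 (pg_m G))).
Definition ev n d (G : PGraph n d) (k : 'I_(pg_m G)) : {mpoly int[nvar G]} :=
  'X_(lshift n (rshift 1 k)).
Arguments ev {n d} G k.
Definition Vv n d (G : PGraph n d) (i : 'I_n) : {mpoly int[nvar G]} :=
  'X_(rshift (1 + pg_m G) i).

(* The generic characteristic matrix M(z,lambda,e,V) = lambda I - H(z,e,V)
   specialized at z = 1:
     M_{v,u} = delta_{v,u} (lambda - V(v)) + sum_{alpha : v ~ alpha + u} e_{(v,alpha+u)}.
   The edges {v, alpha + u} (v,u in W) of the edge orbit represented by
   (a,b,alpha0) are exactly those with (v,u,alpha) = (a,b,alpha0) or
   (v,u,alpha) = (b,a,-alpha0) (these two are distinct, as alpha0 <> 0 when
   a = b), so at z = 1 the orbit contributes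
   ([v = a /\ u = b] + [v = b /\ u = a]) e_k  to the (v,u) entry. *)
Definition charmat1 n d (G : PGraph n d) : 'M[{mpoly int[nvar G]}]_n :=
  \matrix_(i, j)
    ((i == j)%:R * (lamv G - Vv G i) +
     \sum_(k < pg_m G)
        (((i == (pg_rep G k).1.1) && (j == (pg_rep G k).1.2))%:R +
         ((i == (pg_rep G k).1.2) && (j == (pg_rep G k).1.1))%:R) * ev G k).

(* |w| : the multigraph on [n] with one edge {i, w i} per i, encoded as the
   multiplicity of each unordered pair {x,y} (a loop for a fixed point,
   a double edge for a 2-cycle). *)
Definition cyc_cover n (w : 'S_n) : {ffun 'I_n * 'I_n -> nat} :=
  [ffun p => #|[pred i : 'I_n | ((i == p.1) && (w i == p.2))
                               || ((i == p.2) && (w i == p.1))]|].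

Definition Mperm (R : comNzRingType) n (A : 'M[R]_n) (w : 'S_n) : R :=
  \prod_(i < n) A i (w i).

Definition monom n d (G : PGraph n d) := 'X_{1.. nvar G}.

(* Each entry M_ij of M(1, lambda, e, V) is a linear form in variables
   attached to the pair {i, j}: lambda and V_i on the diagonal, and e_k for
   the edge orbits k joining i and j.  Hence a monomial of
   M_w = prod_i M_(i, w i) picks one such variable for each i, and for x <> y
   its total degree in the e_k with k joining x and y is the multiplicity of
   the edge {x, y} in |w|.  So the monomial determines the non-loop edges of
   |w|, and the loops of |w| are the vertices met by no other edge. *)

From HB Require Import structures.
From mathcomp Require Import all_boot all_order all_algebra all_fingroup.
From mathcomp Require Import mpoly zify.
Set Implicit Arguments.
Unset Strict Implicit.
Unset Printing Implicit Defensive.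
Import GRing.Theory.
Local Open Scope ring_scope.

Section UnorderedPairs.
Variable T : eqType.

Definition upair_eq (i j x y : T) : bool :=
  ((i == x) && (j == y)) || ((i == y) && (j == x)).

Lemma upair_eqC i j x y : upair_eq i j x y = upair_eq x y i j.
Proof.
by apply/idP/idP => /orP[] /andP[/eqP-> /eqP->]; rewrite /upair_eq !eqxx ?orbT.
Qed.

Lemma upair_eq_trans i j x y a b :
  upair_eq i j x y -> upair_eq x y a b -> upair_eq i j a b.
Proof.
by case/orP=> /andP[/eqP-> /eqP->] /orP[] /andP[/eqP-> /eqP->];
  rewrite /upair_eq !eqxx ?orbT.
Qed.

Lemma upair_eq_transr i j x y a b :
  upair_eq i j a b -> upair_eq x y a b = upair_eq i j x y.
Proof.
move=> ija; apply/idP/idP => [xya | ijxy].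
  by apply: (upair_eq_trans ija); rewrite upair_eqC.
by rewrite upair_eqC in ijxy; apply: upair_eq_trans ijxy ija.
Qed.

Lemma upair_eq_neq i j x y : x != y -> upair_eq i j x y -> i != j.
Proof. by move=> xy /orP[] /andP[/eqP-> /eqP->]; rewrite // eq_sym. Qed.

End UnorderedPairs.

Lemma cyc_coverE n (w : 'S_n) x y :
  cyc_cover w (x, y) = #|[pred i | upair_eq i (w i) x y]|.
Proof. by rewrite ffunE. Qed.

Lemma cyc_cover_diag n (w : 'S_n) x : cyc_cover w (x, x) = (w x == x).
Proof.
rewrite cyc_coverE -sum1_card big_mkcond (bigD1 x) //=.
rewrite big1 => [|i /negbTE ix].
  by rewrite inE /upair_eq eqxx orbb addn0; case: (w x == x).
by rewrite inE /upair_eq ix.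
Qed.

Lemma perm_movedE n (w : 'S_n) x :
  (w x != x) = [exists y, (y != x) && (0 < cyc_cover w (x, y))%N].
Proof.
apply/idP/existsP => [wx | [y /andP[yx]]].
  exists (w x); rewrite wx cyc_coverE; apply/card_gt0P.
  by exists x; rewrite inE /upair_eq !eqxx.
rewrite cyc_coverE => /card_gt0P[i]; rewrite inE.
case/orP=> /andP[/eqP-> /eqP wi]; first by rewrite wi.
by apply: contra yx => /eqP wxx; apply/eqP/(@perm_inj _ w); rewrite wi wxx.
Qed.

Lemma cyc_cover_offdiag_eq n (w w' : 'S_n) :
  (forall x y, x != y -> cyc_cover w (x, y) = cyc_cover w' (x, y)) ->
  cyc_cover w = cyc_cover w'.
Proof.
move=> off; apply/ffunP => -[x y]; have [<-|xy] := eqVneq x y; last exact: off.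
rewrite !cyc_cover_diag; congr nat_of_bool; apply: negb_inj.
rewrite !perm_movedE; apply: eq_existsb => z.
by have [//|zx] := eqVneq z x; rewrite off // eq_sym.
Qed.

Section MonomialSupport.
Variables (N : nat) (R : nzRingType).
Implicit Types (p q : {mpoly R[N]}) (P : pred 'I_N).

Lemma msupp_prod (I : eqType) (r : seq I) (F : I -> {mpoly R[N]}) m :
  uniq r -> m \in msupp (\prod_(i <- r) F i) ->
  exists2 f : I -> 'X_{1..N},
    forall i, i \in r -> f i \in msupp (F i) & m = (\sum_(i <- r) f i)%MM.
Proof.
elim: r m => [|x r IHr] m /=.
  rewrite big_nil mcoeff_msupp mcoeff1 => _.
  have [-> _|_] := eqVneq m 0%MM; last by rewrite eqxx.
  by exists (fun=> 0%MM); rewrite ?big_nil.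
case/andP=> xNr ur; rewrite big_cons => /msuppM_le/allpairsP.
case=> -[m1 m2] /= [m1F /(IHr _ ur)[f fF ->] ->].
exists (fun i => if i == x then m1 else f i).
  by move=> i; rewrite inE; case: eqP => [-> | _ /fF].
rewrite big_cons eqxx; congr (_ + _)%MM; apply: eq_big_seq => i ir.
by case: eqP ir xNr => [-> ->|].
Qed.

Definition mlinear_in P p :=
  forall m, m \in msupp p -> exists2 v, P v & m = U_(v)%MM.

Lemma mlinear_in0 P : mlinear_in P 0.
Proof. by move=> m; rewrite msupp0. Qed.

Lemma mlinear_inD P p q :
  mlinear_in P p -> mlinear_in P q -> mlinear_in P (p + q).
Proof. by move=> Pp Pq m /msuppD_le; rewrite mem_cat => /orP[/Pp | /Pq]. Qed.

Lemma mlinear_inB P p q :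
  mlinear_in P p -> mlinear_in P q -> mlinear_in P (p - q).
Proof. by move=> Pp Pq m /msuppB_le; rewrite mem_cat => /orP[/Pp | /Pq]. Qed.

Lemma mlinear_in_sum P (I : Type) (r : seq I) (F : I -> {mpoly R[N]}) :
  (forall i, mlinear_in P (F i)) -> mlinear_in P (\sum_(i <- r) F i).
Proof.
move=> PF; apply: (big_ind (mlinear_in P)) => // [|p q].
  exact: mlinear_in0.
exact: mlinear_inD.
Qed.

Lemma mlinear_inX P v : P v -> mlinear_in P 'X_v.
Proof. by move=> Pv m; rewrite msuppX inE => /eqP->; exists v. Qed.

Lemma mlinear_in_boolM P (b : bool) p :
  (b -> mlinear_in P p) -> mlinear_in P (b%:R * p).
Proof.
by case: b => [/(_ isT)|_]; rewrite ?mul1r // mul0r; exact: mlinear_in0.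
Qed.

End MonomialSupport.

Section PeriodicGraph.
Variables (n d : nat) (G : PGraph n d).
Local Notation N := (nvar G).

Definition lam_idx : 'I_N := lshift n (@ord0 (pg_m G)).
Definition e_idx (k : 'I_(pg_m G)) : 'I_N := lshift n (rshift 1 k).
Definition V_idx (i : 'I_n) : 'I_N := rshift (1 + pg_m G) i.

Lemma e_idx_inj : injective e_idx.
Proof. by move=> k k' /(congr1 val) /= kk'; apply: val_inj => /=; lia. Qed.

Lemma e_idx_neq_lam k : e_idx k != lam_idx.
Proof. by apply/eqP => /(congr1 val) /=; lia. Qed.

Lemma e_idx_neq_V k i : e_idx k != V_idx i.
Proof. by apply/eqP => /(congr1 val) /=; have := ltn_ord k; lia. Qed.

Definition joins k (i j : 'I_n) : bool :=
  upair_eq i j (pg_rep G k).1.1 (pg_rep G k).1.2.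

Definition entry_var (i j : 'I_n) (v : 'I_N) : bool :=
  ((i == j) && ((v == lam_idx) || (v == V_idx i)))
  || [exists k, (v == e_idx k) && joins k i j].

Lemma charmat1_mlinear i j : mlinear_in (entry_var i j) (charmat1 G i j).
Proof.
rewrite mxE; apply: mlinear_inD.
  apply: mlinear_in_boolM => /eqP <-.
  by apply: mlinear_inB; apply: mlinear_inX; rewrite /entry_var !eqxx ?orbT.
apply: mlinear_in_sum => k; rewrite mulrDl.
have joins_var (b : bool) :
    (b -> joins k i j) -> mlinear_in (entry_var i j) (b%:R * ev G k).
  move=> bk; apply: mlinear_in_boolM => /bk ijk; apply: mlinear_inX.
  by apply/orP; right; apply/existsP; exists k; rewrite eqxx ijk.
by apply: mlinear_inD; apply: joins_var => ijk;
  rewrite /joins /upair_eq ijk ?orbT.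
Qed.

Definition edge_mult (m : 'X_{1..N}) (x y : 'I_n) : nat :=
  \sum_(k | joins k x y) m (e_idx k).

Lemma edge_mult_sum (I : Type) (r : seq I) (f : I -> 'X_{1..N}) x y :
  edge_mult (\sum_(i <- r) f i)%MM x y = \sum_(i <- r) edge_mult (f i) x y.
Proof.
by rewrite /edge_mult; under eq_bigr do rewrite mnm_sumE; exact: exchange_big.
Qed.

Lemma edge_mult_var i j v x y :
  x != y -> entry_var i j v -> edge_mult U_(v) x y = upair_eq i j x y.
Proof.
move=> xy ijv; rewrite /edge_mult; under eq_bigr do rewrite mnm1E.
case: (pickP (fun k => v == e_idx k)) => [k0 /eqP vk0 | noE]; last first.
  rewrite big1 => [|k _]; last by rewrite noE.
  have /andP[/eqP <- _] : (i == j) && ((v == lam_idx) || (v == V_idx i)).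
    by case/orP: ijv => // /existsP[k /andP[]]; rewrite noE.
  by case E: upair_eq => //; move: (upair_eq_neq xy E); rewrite eqxx.
have ijk0 : joins k0 i j.
  move: ijv; rewrite vk0 /entry_var (negbTE (e_idx_neq_lam k0)).
  rewrite (negbTE (e_idx_neq_V k0 i)) andbF /=.
  by case/existsP=> k /andP[/eqP/e_idx_inj ->].
rewrite -(upair_eq_transr x y ijk0) vk0.
under eq_bigr do rewrite (inj_eq e_idx_inj).
case jk0: (upair_eq x y _ _).
  rewrite (bigD1 k0) //= eqxx big1 ?addn0 // => k /andP[_].
  by rewrite eq_sym => /negbTE->.
by rewrite big1 // => k jk; case: eqP jk => // <-; rewrite /joins jk0.
Qed.

Lemma Mperm_cyc_cover (w : 'S_n) m x y :
  m \in msupp (Mperm (charmat1 G) w) -> x != y ->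
  cyc_cover w (x, y) = edge_mult m x y.
Proof.
move=> /(msupp_prod (index_enum_uniq _))[f wf ->] xy.
rewrite cyc_coverE edge_mult_sum -sum1_card big_mkcond /=.
apply: eq_bigr => i _.
have [v iwv ->] := charmat1_mlinear (wf i (mem_index_enum i)).
by rewrite (edge_mult_var xy iwv) inE; case: upair_eq.
Qed.

End PeriodicGraph.

Theorem lemma2p3 (n d : nat) (G : PGraph n d) (w w' : 'S_n)
  (m : monom G) :
  Mperm (charmat1 G) w != 0 ->
  Mperm (charmat1 G) w' != 0 ->
  m \in msupp (Mperm (charmat1 G) w) ->
  m \in msupp (Mperm (charmat1 G) w') ->
  cyc_cover w = cyc_cover w'.
Proof.
move=> _ _ mw mw'; apply: cyc_cover_offdiag_eq => x y xy.
by rewrite (Mperm_cyc_cover mw xy) (Mperm_cyc_cover mw' xy).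
Qed.
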